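(* Let $n\ge2$. There is no homeomorphism $\Phi:Q\to(\mathcal K_0^n,d_{AW})$ such that for all $x,y\in Q$, $x\preceq y$ if and only if $\Phi(x)\subseteq\Phi(y)$.
   Context: $Q=\prod_{i=1}^\infty[-1,1]$ with the product topology and the coordinatewise partial order: $x\preceq y$ iff $x_i\le y_i$ for all $i$. $\mathcal K_0^n$: closed convex subsets of $\mathbb R^n$ containing $0$, with the Attouch–Wets metric $d_{AW}(A,K)=\sup_{j\in\mathbb N}\min\{\frac1j,\sup_{\|x\|<j}|d(x,A)-d(x,K)|\}$, $d(x,A)=\inf_{a\in A}\|x-a\|$. *)

From HB Require Import structures.
From mathcomp Require Import all_boot all_order all_algebra.
From mathcomp Require Import all_classical all_reals all_analysis.
Set Implicit Arguments. Unset Strict Implicit. Unset Printing Implicit Defensive.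
Import Order.TTheory GRing.Theory Num.Theory.
Import numFieldNormedType.Exports.
Local Open Scope classical_set_scope.
Local Open Scope ring_scope.

Section Defs.
Variable R : realType.

(* The Hilbert cube Q = prod_{i} [-1,1], points indexed by nat. *)
Definition Qset : set (nat -> R) := [set x | forall i, -1 <= x i <= 1].

Definition Qle (x y : nat -> R) : Prop := forall i, x i <= y i.

(* Open subsets of Q for the product topology (basic neighbourhoods:
   finitely many coordinates within epsilon). *)
Definition Q_open (U : set (nat -> R)) : Prop :=
  U `<=` Qset /\
  forall x, U x -> exists (N : nat) (e : R), 0 < e /\
    forall y, Qset y -> (forall i, (i < N)%N -> `|y i - x i| < e) -> U y.

Variable n : nat.

Definition enorm (x : 'rV[R]_n) : R := Num.sqrt (\sum_(i < n) x ord0 i ^+ 2).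

Definition edist (x : 'rV[R]_n) (A : set 'rV[R]_n) : R :=
  inf [set enorm (x - a) | a in A].

Definition convex_set (A : set 'rV[R]_n) : Prop :=
  forall a b t, A a -> A b -> 0 <= t <= 1 -> A (t *: a + (1 - t) *: b).

Definition K0 : set (set 'rV[R]_n) :=
  [set A | closed A /\ convex_set A /\ A 0].

Definition dAW (A K : set 'rV[R]_n) : R :=
  sup [set Num.min (j%:R^-1)
          (sup [set `|edist x A - edist x K| | x in [set x | enorm x < j%:R]])
       | j in [set j : nat | (0 < j)%N]].

Definition K0_open (U : set (set 'rV[R]_n)) : Prop :=
  U `<=` K0 /\
  forall A, U A -> exists e : R, 0 < e /\
    forall B, K0 B -> dAW A B < e -> U B.

Definition homeo_Q_K0 (Phi : (nat -> R) -> set 'rV[R]_n) : Prop :=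
  [/\ (forall x, Qset x -> K0 (Phi x)),
      {in Qset &, injective Phi},
      (forall A, K0 A -> exists2 x, Qset x & Phi x = A),
      (forall V, K0_open V -> Q_open (Qset `&` Phi @^-1` V)) &
      (forall U, Q_open U -> K0_open (Phi @` U))].

End Defs.

(* An order isomorphism between Q and (K_0^n, ⊆) would transport the
   distributivity of the coordinatewise lattice Q (meets and joins are pointwise
   min and max) to K_0^n.  But in the plane of two coordinates x, y the three
   lines {y = 0}, {x = 0} and {x = y} pairwise meet only in {x = y = 0}, while
   every convex set containing the first two contains the third: a distributive
   lattice cannot contain such a configuration. *)
From Pilot Require Import Defs.
From HB Require Import structures.
From mathcomp Require Import all_boot all_order all_algebra.
From mathcomp Require Import all_classical all_reals all_analysis.
From mathcomp Require Import ring.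
Import numFieldNormedType.Exports.
Set Implicit Arguments.
Unset Strict Implicit.
Import Order.TTheory GRing.Theory Num.Theory.
Local Open Scope classical_set_scope.
Local Open Scope ring_scope.

Section HilbertCubeLattice.
Variable R : realType.
Implicit Types x y z : nat -> R.

Lemma Qset_min x y : Qset x -> Qset y -> Qset (fun i => Num.min (x i) (y i)).
Proof.
move=> Qx Qy i; have /andP[x1 x2] := Qx i; have /andP[y1 y2] := Qy i.
by rewrite le_min ge_min x1 y1 x2.
Qed.

Lemma Qset_max x y : Qset x -> Qset y -> Qset (fun i => Num.max (x i) (y i)).
Proof.
move=> Qx Qy i; have /andP[x1 x2] := Qx i; have /andP[y1 y2] := Qy i.
by rewrite le_max ge_max x1 x2 y2.
Qed.

Lemma Qle_distr (a b c d : nat -> R) :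
  Qle a (fun i => Num.max (b i) (c i)) ->
  Qle (fun i => Num.min (a i) (b i)) d ->
  Qle (fun i => Num.min (a i) (c i)) d -> Qle a d.
Proof.
move=> abc abd acd i.
by rewrite -(min_idPl (abc i)) min_maxr ge_max abd acd.
Qed.

End HilbertCubeLattice.

Section ConvexLines.
Variables (R : realType) (n : nat).
Implicit Types A B C K : set 'rV[R]_n.

Lemma K0_setI A B : K0 A -> K0 B -> K0 (A `&` B).
Proof.
move=> [cA [vA A0]] [cB [vB B0]]; split; first exact: closedI.
by split=> // a b t [aA aB] [bA bB] t01; split; [exact: vA | exact: vB].
Qed.

Definition coord_line (k l : 'I_n) (c : R) : set 'rV[R]_n :=
  [set v | v ord0 k = c * v ord0 l].

Lemma K0_coord_line k l c : K0 (coord_line k l c).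
Proof.
split; [|split].
- have -> : coord_line k l c =
      (fun v : 'rV[R]_n => v ord0 k - c * v ord0 l) @^-1` [set 0].
    rewrite predeqE => v /=; split=> [->|/eqP]; first by rewrite subrr.
    by rewrite subr_eq0 => /eqP.
  apply: preimage_closed; last exact: closed_eq.
  move=> v _.
  have cl : (fun w : 'rV[R]_n => c * w ord0 l) @ v --> c * v ord0 l.
    exact: cvgMl_tmp (@coord_continuous R 1 n ord0 l v).
  exact: (cvgB (@coord_continuous R 1 n ord0 k v) cl).
- move=> a b t ak bk _; rewrite /coord_line /= !mxE ak bk; ring.
- by rewrite /coord_line /= !mxE mulr0.
Qed.

Variables (i j : 'I_n).

Let Lx := coord_line j i 0.
Let Ly := coord_line i j 0.
Let Ldiag := coord_line i j 1.

Lemma coord_lines_meet : Ldiag `&` Lx = Lx `&` Ly /\ Ldiag `&` Ly = Lx `&` Ly.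
Proof.
rewrite /Ldiag /Lx /Ly /coord_line.
by split; rewrite predeqE => v /=; rewrite !mul0r mul1r; split=> -[-> ->].
Qed.

Hypothesis neq_ij : i != j.

(* Each point (s, t, w) is the midpoint of (2s, 0, w) and (0, 2t, w). *)
Lemma convex_coord_lines_full K : Defs.convex_set K -> Lx `<=` K -> Ly `<=` K -> K = setT.
Proof.
move=> vK LxK LyK; apply/seteqP; split=> // v _.
pose b : 'rV[R]_n := \row_k (if k == j then 0 else if k == i then 2 * v ord0 i else v ord0 k).
pose c : 'rV[R]_n := \row_k (if k == i then 0 else if k == j then 2 * v ord0 j else v ord0 k).
have -> : v = 2^-1 *: b + (1 - 2^-1) *: c.
  apply/rowP => k; rewrite !mxE.
  case: (eqVneq k i) => [->|_]; first by rewrite (negbTE neq_ij); field.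
  by case: (eqVneq k j) => [->|_]; field.
apply: vK; [apply: LxK | apply: LyK |].
- by rewrite /Lx /coord_line /= !mxE eqxx mul0r.
- by rewrite /Ly /coord_line /= !mxE eqxx mul0r.
- by rewrite invr_ge0 ler0n /= invf_le1 ?ler1n.
Qed.

Lemma coord_diag_not_sub : ~ Ldiag `<=` Lx `&` Ly.
Proof.
move=> /(_ (const_mx 1)); rewrite /Ldiag /Lx /coord_line /= !mxE !mul1r mul0r.
by case=> // /eqP; rewrite oner_eq0.
Qed.

End ConvexLines.

Section OrderIsomorphism.
Variables (R : realType) (n : nat) (Phi : (nat -> R) -> set 'rV[R]_n).
Hypothesis Phi_K0 : forall x, Qset x -> K0 (Phi x).
Hypothesis Phi_onto : forall A, K0 A -> exists2 x, Qset x & Phi x = A.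
Hypothesis Phi_order : forall x y, Qset x -> Qset y -> (Qle x y <-> Phi x `<=` Phi y).

Lemma order_iso_distributive (A B C D : set 'rV[R]_n) :
  K0 A -> K0 B -> K0 C -> K0 D ->
  A `&` B `<=` D -> A `&` C `<=` D ->
  (forall K, K0 K -> B `<=` K -> C `<=` K -> A `<=` K) -> A `<=` D.
Proof.
move=> /Phi_onto[a Qa <-] /Phi_onto[b Qb <-] /Phi_onto[c Qc <-] /Phi_onto[d Qd <-].
move=> abD acD hull.
have Qbc := Qset_max Qb Qc; have Qab := Qset_min Qa Qb; have Qac := Qset_min Qa Qc.
apply/Phi_order => //; apply: Qle_distr.
- apply/Phi_order => //; apply: hull; first exact: Phi_K0.
  + by apply/Phi_order => // i; rewrite le_max lexx.
  + by apply/Phi_order => // i; rewrite le_max lexx orbT.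
- apply/Phi_order => // v hv; apply: abD; split; move: v hv; apply/Phi_order => // i;
    by rewrite ge_min lexx ?orbT.
- apply/Phi_order => // v hv; apply: acD; split; move: v hv; apply/Phi_order => // i;
    by rewrite ge_min lexx ?orbT.
Qed.

End OrderIsomorphism.

Theorem mainTheorem20 (R : realType) (n : nat) (hn : (2 <= n)%N) :
  ~ exists Phi : (nat -> R) -> set 'rV[R]_n,
      homeo_Q_K0 Phi /\
      (forall x y, Qset x -> Qset y -> (Qle x y <-> Phi x `<=` Phi y)).
Proof.
move=> [Phi [[Phi_K0 _ Phi_onto _ _] Phi_order]].
pose i := @Ordinal n 0 (ltnW hn); pose j := @Ordinal n 1 hn.
have neq_ij : i != j by [].
have [meet_x meet_y] := @coord_lines_meet R n i j.
apply: (@coord_diag_not_sub R n i j).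
apply: (order_iso_distributive (B := coord_line j i 0) (C := coord_line i j 0)
          Phi_K0 Phi_onto Phi_order); rewrite ?meet_x ?meet_y //.
- exact: K0_coord_line.
- exact: K0_coord_line.
- exact: K0_coord_line.
- exact: K0_setI (K0_coord_line _ _ _) (K0_coord_line _ _ _).
- by move=> K [_ [vK _]] LxK LyK; rewrite (convex_coord_lines_full neq_ij vK LxK LyK).
Qed.
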